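(* Under the standing setting and assumptions (A1)–(A3) described in the context, assume $\mathcal A^\infty\cap\ker(\pi)=\{0\}$ (absence of scalable good deals). Then $\mathcal R(X)\neq\emptyset$ for every $X\in\mathcal X$.
   Context: Let $\mathcal X$ be a Hausdorff, first countable, locally convex topological vector space over $\mathbb R$, partially ordered by a partial order $\geq$ with positive cone $\mathcal X_+=\{X\in\mathcal X: X\geq 0\}$. Let $\mathcal M\subset\mathcal X$ be a vector subspace with $1<\dim\mathcal M<\infty$, carrying the relative topology, and let $\pi:\mathcal M\to\mathbb R$ be linear with $\ker(\pi)=\{Z\in\mathcal M:\pi(Z)=0\}$. Standing assumptions: (A1) there is $U\in\mathcal M\cap\mathcal X_+$ with $\pi(U)=1$; (A2) $\mathcal A\subsetneq\mathcal X$ is closed, contains $0$, and satisfies $\mathcal A+\mathcal X_+\subset\mathcal A$; (A3) the map $\rho(X)=\inf\{\pi(Z): Z\in\mathcal M,\ X+Z\in\mathcal A\}$ is finitely valued and continuous on $\mathcal X$. The optimal payoff map is $\mathcal R(X)=\{Z\in\mathcal M: X+Z\in\mathcal A,\ \pi(Z)=\rho(X)\}$. The asymptotic cone is $\mathcal A^\infty=\bigcap_{\varepsilon>0}\mathrm{cl}\{\lambda X:\lambda\in[0,\varepsilon],X\in\mathcal A\}$. *)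

From HB Require Import structures.
From mathcomp Require Import all_boot all_order all_algebra.
From mathcomp Require Import all_classical all_reals all_analysis.
Set Implicit Arguments. Unset Strict Implicit. Unset Printing Implicit Defensive.
Import Order.TTheory GRing.Theory Num.Theory.
Local Open Scope classical_set_scope.
Local Open Scope ring_scope.

Definition first_countable (T : topologicalType) : Prop :=
  forall x : T, exists B : nat -> set T,
    (forall n, nbhs x (B n)) /\ (forall U, nbhs x U -> exists n, B n `<=` U).

Definition partial_order_ge (E : Type) (ge : E -> E -> Prop) : Prop :=
  (forall x, ge x x) /\ (forall x y, ge x y -> ge y x -> x = y) /\
  (forall x y z, ge x y -> ge y z -> ge x z).

Definition is_subspace (R : numDomainType) (E : lmodType R) (M : set E) : Prop :=
  M 0 /\ (forall (a : R) x y, M x -> M y -> M (a *: x + y)).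

Definition has_dim (R : numDomainType) (E : lmodType R) (M : set E) (n : nat) : Prop :=
  exists b : 'I_n -> E,
    (forall c : 'I_n -> R, \sum_(i < n) c i *: b i = 0 -> forall i, c i = 0) /\
    M = [set \sum_(i < n) c i *: b i | c in [set: 'I_n -> R]].

(* pi : M -> R linear (values of pi outside M are irrelevant) *)
Definition linear_on (R : numDomainType) (E : lmodType R) (M : set E) (pi : E -> R) : Prop :=
  forall (a : R) x y, M x -> M y -> pi (a *: x + y) = a * pi x + pi y.

Definition rho (R : realType) (E : lmodType R) (M : set E) (pi : E -> R)
  (A : set E) (X : E) : \bar R :=
  ereal_inf [set (pi Z)%:E | Z in [set Z | M Z /\ A (X + Z)]].

Definition optR (R : realType) (E : lmodType R) (M : set E) (pi : E -> R)
  (A : set E) (X : E) : set E :=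
  [set Z | M Z /\ A (X + Z) /\ (pi Z)%:E = rho M pi A X].

Definition asym_cone (R : realType) (E : tvsType R) (A : set E) : set E :=
  \bigcap_(e in [set e : R | 0 < e])
     closure [set y : E | exists l : R, exists x : E, 0 <= l <= e /\ A x /\ y = l *: x].

Definition kerM (R : numDomainType) (E : lmodType R) (M : set E) (pi : E -> R) : set E :=
  [set Z | M Z /\ pi Z = 0].

(* Fix a basis b of M, so that payoffs are rV_comb b c for coordinates c in
   R^n and pi becomes a linear form f of c.  Take feasible coordinates c_k
   whose prices f c_k converge to rho X.  If (c_k) is bounded, a cluster point
   of it is feasible because A is closed, and its price is rho X.  Otherwise,
   along a subsequence, c_k / |c_k| clusters at a unit vector d.  The points
   |c_k|^-1 (X + rV_comb b c_k) of the cones through A then accumulate at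
   rV_comb b d, which therefore lies in the asymptotic cone of A, while
   f d = lim f c_k / |c_k| = 0: a nonzero scalable good deal. *)

From HB Require Import structures.
From mathcomp Require Import all_boot all_order all_algebra.
From mathcomp Require Import all_classical all_reals all_analysis.
From mathcomp Require Import lra.
Import Order.TTheory GRing.Theory Num.Theory.
Import numFieldTopology.Exports.
Local Open Scope classical_set_scope.
Local Open Scope ring_scope.
Set Implicit Arguments. Unset Strict Implicit. Unset Printing Implicit Defensive.

Lemma cluster_near_meets {I} {T : topologicalType} (F : set_system I) {FF : Filter F}
    (u : I -> T) (l : T) (P : I -> Prop) (B : set T) :
  cluster (u @ F) l -> (\forall i \near F, P i) -> nbhs l B ->
  exists i, P i /\ B (u i).
Proof.
move=> ul FP lB.
have Fu : (u @ F) (u @` P) by apply: filterS FP => i Pi; exists i.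
by have [_ [[i Pi <-] Bui]] := ul _ _ Fu lB; exists i.
Qed.

Lemma cluster_map {T U : topologicalType} (F : set_system T) (h : T -> U) (l : T) :
  cluster F l -> {for l, continuous h} -> cluster (h @ F) (h l).
Proof.
move=> Fl hl B C FB /hl lC.
by have [x [Bx Cx]] := Fl _ _ FB lC; exists (h x).
Qed.

Lemma closed_cluster {T : topologicalType} (F : set_system T) (S : set T) (l : T) :
  closed S -> F S -> cluster F l -> S l.
Proof.
move=> /closure_id S_closure FS Fl; rewrite S_closure => B lB.
exact: Fl FS lB.
Qed.

Lemma cluster_cvg_pair {I} {T U : topologicalType} (F : set_system I) {FF : Filter F}
    (a : I -> T) (b : I -> U) (a0 : T) (b0 : U) :
  a @ F --> a0 -> cluster (b @ F) b0 -> cluster ((fun i => (a i, b i)) @ F) (a0, b0).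
Proof.
move=> a_cvg b_cl B C FB [[Ca Cb] /= [a0Ca b0Cb] CabC].
have FBCa : \forall i \near F, B (a i, b i) /\ Ca (a i).
  by apply: filterI => //; exact: a_cvg.
have [i [[Bi Cai] Cbi]] := cluster_near_meets b_cl FBCa b0Cb.
by exists (a i, b i); split => //; exact: CabC.
Qed.

Lemma continuous_add {T : topologicalType} {E : topologicalZmodType} (f g : T -> E) :
  continuous f -> continuous g -> continuous (fun x => f x + g x).
Proof.
move=> cf cg x.
apply: (@continuous_comp _ _ _ (fun x => (f x, g x)) (fun z : E * E => z.1 + z.2)).
  exact: cvg_pair (cf x) (cg x).
exact: add_continuous.
Qed.

Lemma continuous_scale {R : numFieldType} {T : topologicalType}
    {E : topologicalLmodType R} (s : T -> R^o) (f : T -> E) :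
  continuous s -> continuous f -> continuous (fun x => s x *: f x).
Proof.
move=> cs cf x.
apply: (@continuous_comp _ _ _ (fun x => (s x, f x)) (fun z : R^o * E => z.1 *: z.2)).
  exact: cvg_pair (cs x) (cf x).
exact: scale_continuous.
Qed.

Lemma continuous_sum {T : topologicalType} {E : topologicalZmodType} {I : Type}
    (s : seq I) (F : I -> T -> E) :
  (forall i, continuous (F i)) -> continuous (fun x => \sum_(i <- s) F i x).
Proof.
move=> Fc; elim: s => [|i s IH].
  under eq_fun do rewrite big_nil; exact: cst_continuous.
under eq_fun do rewrite big_cons; exact: continuous_add.
Qed.

Lemma rV_bounded_seq_cluster (R : realType) n (u : nat -> 'rV[R]_n) (K : R) :
  (forall k, `|u k| <= K) -> exists2 l, `|l| <= K & cluster (u @ \oo) l.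
Proof.
move=> uK; pose S := [set v : 'rV[R]_n | `|v| <= K].
have S_closed : closed S.
  apply: (@preimage_closed _ R (fun v : 'rV[R]_n => `|v|) [set x | x <= K]).
    by move=> v _; exact: norm_continuous.
  exact: closed_le.
have S_bounded : bounded_set S.
  rewrite /bounded_near /=; near=> K0 => v /= vK.
  by apply: le_trans vK _; near: K0; apply: nbhs_pinfty_ge; rewrite num_real.
have [l [Sl ul]] : S `&` cluster (u @ \oo) !=set0.
  by apply: bounded_closed_compact => //; exists 0%N => // k _; exact: uK.
by exists l.
Unshelve. all: by end_near.
Qed.

Lemma unbounded_seq_subseq (R : realDomainType) (V : normedZmodType R) (u : nat -> V) :
  ~ (exists K, forall k, `|u k| <= K) ->
  exists psi : nat -> nat, forall m, m%:R < `|u (psi m)|.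
Proof.
move=> u_unbounded.
have /choice [psi u_psi] : forall m, exists k, m%:R < `|u k|.
  move=> m; apply: contra_notP u_unbounded => uK; exists m%:R => k.
  by rewrite leNgt; apply/negP => mk; apply: uK; exists k.
by exists psi.
Qed.

Lemma asym_cone_cluster (R : realType) (E : tvsType R) (A : set E) (x : nat -> E)
    (t : nat -> R) (w : E) :
  (forall m, A (x m)) -> (forall m, m%:R < t m) ->
  cluster ((fun m => (t m)^-1 *: x m) @ \oo) w -> asym_cone A w.
Proof.
move=> Ax tm w_cl eps /= eps0 B wB.
have small : \forall m \near \oo, (t m)^-1 <= eps.
  near=> m; have t_pos : 0 < t m by apply: le_lt_trans (tm m).
  rewrite invf_ple ?posrE //; apply/ltW/(lt_trans _ (tm m)); near: m.
  exact: nbhs_infty_gtr.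
have [m [tm_eps Bm]] := cluster_near_meets w_cl small wB.
exists ((t m)^-1 *: x m); split => //; exists (t m)^-1, (x m); split => //.
by rewrite tm_eps andbT invr_ge0 ltW // (le_lt_trans _ (tm m)).
Unshelve. all: by end_near.
Qed.

Definition rV_comb (R : ringType) (V : lmodType R) n (b : 'I_n -> V) (c : 'rV[R]_n)
    : V :=
  \sum_(i < n) c ord0 i *: b i.

Lemma rV_combZ (R : comRingType) (V : lmodType R) n (b : 'I_n -> V) (t : R) c :
  rV_comb b (t *: c) = t *: rV_comb b c.
Proof.
by rewrite /rV_comb scaler_sumr; apply: eq_bigr => i _; rewrite mxE scalerA.
Qed.

Lemma rV_comb_continuous (R : numFieldType) (V : topologicalLmodType R) n (b : 'I_n -> V) :
  continuous (rV_comb b).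
Proof.
have := @continuous_sum _ V _ (index_enum 'I_n)
  (fun i (c : 'rV[R]_n) => c ord0 i *: b i).
apply=> i.
by apply: continuous_scale; [exact: coord_continuous | exact: cst_continuous].
Qed.

Section SubspaceBasis.
Variables (R : numDomainType) (E : lmodType R) (M : set E) (n : nat) (b : 'I_n -> E).
Hypothesis M_subspace : is_subspace M.
Hypothesis b_free :
  forall c : 'I_n -> R, \sum_(i < n) c i *: b i = 0 -> forall i, c i = 0.
Hypothesis M_span : M = [set \sum_(i < n) c i *: b i | c in [set: 'I_n -> R]].

Lemma rV_comb_in c : M (rV_comb b c).
Proof. by rewrite M_span; exists (c ord0). Qed.

Lemma basis_in i : M (b i).
Proof.
rewrite M_span; exists (fun j => (j == i)%:R) => //.
rewrite (bigD1 i) //= eqxx scale1r big1 ?addr0 // => j /negbTE ->.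
by rewrite scale0r.
Qed.

Lemma rV_comb_onto Z : M Z -> exists c, rV_comb b c = Z.
Proof.
rewrite M_span => -[c _ <-]; exists (\row_i c i).
by apply: eq_bigr => i _; rewrite mxE.
Qed.

Lemma rV_comb_eq0 c : rV_comb b c = 0 -> c = 0.
Proof. by move=> /b_free c0; apply/rowP => i; rewrite mxE c0. Qed.

Lemma linear_on_rV_comb (pi : E -> R) c :
  linear_on M pi -> pi (rV_comb b c) = rV_comb (fun i => pi (b i) : R^o) c.
Proof.
move=> pi_lin; have [M0 M_lin] := M_subspace.
have pi0 : pi 0 = 0.
  have := pi_lin 1 0 0 M0 M0; rewrite scale1r addr0 mul1r => pi00.
  by apply: (addrI (pi 0)); rewrite addr0 -pi00.
suff [] : M (rV_comb b c) /\ pi (rV_comb b c) = rV_comb (fun i => pi (b i) : R^o) c.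
  by [].
apply: (big_rec2 (fun y1 y2 => M y1 /\ pi y1 = y2)) => // i y1 y2 _ [My1 <-].
by split; [exact: M_lin (basis_in i) My1 | exact: pi_lin (basis_in i) My1].
Qed.

End SubspaceBasis.

Section FiniteRho.
Variables (R : realType) (E : lmodType R) (M : set E) (pi : E -> R) (A : set E) (X : E).
Hypothesis rho_fin : rho M pi A X \is a fin_num.

Lemma rho_le Z : M Z -> A (X + Z) -> fine (rho M pi A X) <= pi Z.
Proof.
move=> MZ AZ; rewrite -lee_fin fineK //.
by apply: ereal_inf_lbound; exists Z.
Qed.

Lemma rho_approx e : 0 < e ->
  exists Z, [/\ M Z, A (X + Z) & pi Z < fine (rho M pi A X) + e].
Proof.
move=> e0; have : (rho M pi A X < (fine (rho M pi A X) + e)%:E)%E.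
  by rewrite -{1}(fineK rho_fin) lte_fin ltrDl.
by move=> /ereal_inf_lt [_ [Z [MZ AZ] <-]]; rewrite lte_fin; exists Z.
Qed.

Lemma optR_fine Z :
  M Z -> A (X + Z) -> pi Z = fine (rho M pi A X) -> optR M pi A X Z.
Proof. by move=> MZ AZ piZ; split; [|split] => //; rewrite piZ fineK. Qed.

End FiniteRho.

Section Attainment.
Variables (R : realType) (E : tvsType R) (n : nat).
Variables (g : 'rV[R]_n -> E) (f : 'rV[R]_n -> R).
Hypotheses (g_cont : continuous g) (f_cont : continuous f).
Hypotheses (gZ : forall t c, g (t *: c) = t *: g c) (fZ : forall t c, f (t *: c) = t * f c).
Variables (A : set E) (X : E).

Lemma recession_direction (e : nat -> 'rV[R]_n) (C : R) :
  (forall m, A (X + g (e m))) -> (forall m, `|f (e m)| <= C) ->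
  (forall m, m%:R < `|e m|) ->
  exists2 d, d != 0 & asym_cone A (g d) /\ f d = 0.
Proof.
move=> Ae fC e_large.
have e_pos m : 0 < `|e m| by apply: le_lt_trans (e_large m).
pose d m := `|e m|^-1 *: e m.
have d_unit m : `|d m| = 1 by rewrite normrZ normfV normr_id mulVf // gt_eqF.
have [dl _ d_cl] : exists2 dl, `|dl| <= 1 & cluster (d @ \oo) dl.
  by apply: rV_bounded_seq_cluster => m; rewrite d_unit.
have dl_unit : `|dl| = 1.
  have norm_cl := cluster_map d_cl (@norm_continuous _ _ dl).
  apply: (closed_cluster (@closed_eq _ 1) _ norm_cl).
  by apply: (@filterE nat) => m; exact: d_unit.
exists dl; first by rewrite -normr_eq0 dl_unit oner_eq0.
split.
  pose Phi (z : R^o * 'rV[R]_n) : E := z.1 *: X + g z.2.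
  have Phi_cont : continuous Phi.
    apply: continuous_add.
      by apply: continuous_scale => [z|]; [exact: cvg_fst | exact: cst_continuous].
    move=> z; apply: (@continuous_comp _ _ _ (fun z : R^o * 'rV[R]_n => z.2) g).
      exact: cvg_snd.
    exact: g_cont.
  have inv_cvg : (fun m => `|e m|^-1 : R^o) @ \oo --> (0 : R^o).
    apply/cvgr0Pnorm_lt => eps eps0; near=> m.
    rewrite normfV normr_id invf_plt ?posrE //; apply: lt_trans (e_large m).
    by near: m; exact: nbhs_infty_gtr.
  have Phi_seq : Phi \o (fun m => (`|e m|^-1 : R^o, d m))
              = (fun m => `|e m|^-1 *: (X + g (e m))).
    by apply/funext => m; rewrite /Phi /d /= gZ scalerDr.
  have Phi0 : Phi (0, dl) = g dl by rewrite /Phi /= scale0r add0r.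
  apply: (asym_cone_cluster Ae e_large); rewrite -Phi_seq -Phi0.
  exact: cluster_map (cluster_cvg_pair inv_cvg d_cl) (Phi_cont (0, dl)).
apply/eqP; rewrite -normr_le0; apply/ler_addgt0Pr => eps eps0; rewrite add0r.
have normf_cont : {for dl, continuous (fun v => `|f v|)}.
  apply: (@continuous_comp _ _ _ f Num.norm); first exact: f_cont.
  exact: norm_continuous.
apply: (closed_cluster (@closed_le _ eps) _ (cluster_map d_cl normf_cont)).
suff : \forall m \near \oo, `|f (d m)| <= eps by [].
near=> m; rewrite /d fZ normrM normfV normr_id mulrC ler_pdivrMr //.
apply: le_trans (fC m) _; rewrite -ler_pdivrMl //.
by apply/ltW/(lt_trans _ (e_large m)); near: m; exact: nbhs_infty_gtr.
Unshelve. all: by end_near.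
Qed.

Lemma bounded_minimizing_seq_attained (r K : R) (c : nat -> 'rV[R]_n) :
  closed A -> (forall v, A (X + g v) -> r <= f v) ->
  (forall k, A (X + g (c k)) /\ f (c k) < r + k.+1%:R^-1) ->
  (forall k, `|c k| <= K) ->
  exists2 l, A (X + g l) & f l = r.
Proof.
move=> A_closed r_lb c_min cK.
have [l _ c_cl] := rV_bounded_seq_cluster cK.
have shift_cont : continuous (fun v => X + g v).
  by apply: continuous_add => //; exact: cst_continuous.
have Al : A (X + g l).
  apply: (closed_cluster A_closed _ (cluster_map c_cl (shift_cont l))).
  by apply: (@filterE nat) => k; exact: (c_min k).1.
exists l => //; apply/eqP; rewrite eq_le r_lb // andbT.
apply/ler_addgt0Pr => eps eps0.
have f_cl := cluster_map c_cl (@f_cont l).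
apply: (closed_cluster (@closed_le _ (r + eps)) _ f_cl).
suff : \forall k \near \oo, f (c k) <= r + eps by [].
near=> k; apply/ltW/(lt_trans (c_min k).2); rewrite ltrD2l; near: k.
exact: (near_infty_natSinv_lt (PosNum eps0)).
Unshelve. all: by end_near.
Qed.

Lemma minimizing_seq_attained (r : R) (c : nat -> 'rV[R]_n) :
  closed A -> (forall v, A (X + g v) -> r <= f v) ->
  (forall d, asym_cone A (g d) -> f d = 0 -> d = 0) ->
  (forall k, A (X + g (c k)) /\ f (c k) < r + k.+1%:R^-1) ->
  exists2 l, A (X + g l) & f l = r.
Proof.
move=> A_closed r_lb no_direction c_min.
have [[K cK]|c_unbounded] := pselect (exists K, forall k, `|c k| <= K).
  exact: bounded_minimizing_seq_attained cK.
have [psi c_psi] := unbounded_seq_subseq c_unbounded.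
have f_bounded k : `|f (c k)| <= `|r| + 1.
  have z1 : k.+1%:R^-1 <= 1 :> R by rewrite invf_le1 ?ler1n ?ltr0n.
  (* [lra] fails to read [k.+1%:R^-1] as an atom, hence the generalization. *)
  move: (k.+1%:R^-1) z1 (c_min k).2 => z z1 ub.
  have lb := r_lb _ (c_min k).1; have r_le := ler_norm r.
  have r_ge : - `|r| <= r by exact: lerNnormlW.
  by rewrite ler_norml; apply/andP; split; lra.
have [d /eqP d0 [d_cone fd]] :=
  recession_direction (fun m => (c_min (psi m)).1) (fun m => f_bounded (psi m)) c_psi.
by have := no_direction d d_cone fd.
Qed.

End Attainment.

Theorem mainTheorem8 (R : realType) (E : tvsType R)
  (ge : E -> E -> Prop) (M : set E) (n : nat) (pi : E -> R) (A : set E) :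
  hausdorff_space E -> first_countable E ->
  partial_order_ge ge ->
  is_subspace M -> has_dim M n -> (1 < n)%N -> linear_on M pi ->
  (* (A1) *)
  (exists U, M U /\ ge U 0 /\ pi U = 1) ->
  (* (A2) *)
  closed A -> A 0 -> A <> setT ->
  (forall a p, A a -> ge p 0 -> A (a + p)) ->
  (* (A3) *)
  (forall X, rho M pi A X \is a fin_num) ->
  continuous (fun X => fine (rho M pi A X)) ->
  (* no scalable good deals *)
  asym_cone A `&` kerM M pi = [set 0] ->
  forall X, optR M pi A X !=set0.
Proof.
move=> _ _ _ M_subspace [b [b_free M_span]] _ pi_lin _ A_closed _ _ _ rho_fin _
  no_deals X.
pose f := rV_comb (fun i => pi (b i) : R^o).
have pi_comb c : pi (rV_comb b c) = f c := linear_on_rV_comb M_subspace M_span c pi_lin.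
have r_lb c : A (X + rV_comb b c) -> fine (rho M pi A X) <= f c.
  by move=> Ac; rewrite -pi_comb; apply: rho_le => //; exact: rV_comb_in.
have /choice [c c_min] : forall k : nat, exists c,
    A (X + rV_comb b c) /\ f c < fine (rho M pi A X) + k.+1%:R^-1.
  move=> k; have k_pos : 0 < k.+1%:R^-1 :> R by rewrite invr_gt0.
  have [Z [MZ AZ Z_lt]] := rho_approx (rho_fin X) k_pos.
  have [c cZ] := rV_comb_onto M_span MZ.
  by exists c; rewrite -pi_comb cZ.
have no_direction d : asym_cone A (rV_comb b d) -> f d = 0 -> d = 0.
  move=> d_cone fd; apply: (rV_comb_eq0 b_free).
  have : (asym_cone A `&` kerM M pi) (rV_comb b d).
    by split => //; split; [exact: rV_comb_in | rewrite pi_comb].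
  by rewrite no_deals.
have [l Al fl] := minimizing_seq_attained (@rV_comb_continuous _ _ _ b)
  (@rV_comb_continuous _ _ _ _) (rV_combZ b) (rV_combZ _)
  A_closed r_lb no_direction c_min.
by exists (rV_comb b l); apply: optR_fine => //; [exact: rV_comb_in | rewrite pi_comb].
Qed.
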